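(* Let $\pi$ be a Noohi group, $H\subseteq\pi$ a subgroup, and $\pi':=(\pi/\langle H\rangle)^{\mathrm{Noohi}}$ the Noohi quotient with canonical map $\pi\to\pi'$. Let $G$ be a Hausdorff topological group and $\lambda':\pi'\to G$ a continuous homomorphism, and put $\lambda:=\lambda'\circ(\pi\to\pi')$. Then $\lambda$ is discrete if and only if $\lambda'$ is discrete.
   Context: A continuous homomorphism of topological groups is discrete if it factors through a discrete group (equivalently its kernel is open). A Noohi group is a topological group $\pi$ with $\pi\to\operatorname{Aut}(F_\pi)$ a topological isomorphism ($F_\pi$ forgetful functor on discrete $\pi$-sets, compact-open topology). $\langle H\rangle$ is the smallest normal subgroup containing $H$, and $(-)^{\mathrm{Noohi}}$ is the left adjoint of the inclusion of Noohi groups into topological groups. *)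

From Stdlib Require Import List.
Set Implicit Arguments.

Record TopGroup := {
  tg_car :> Type;
  tg_mul : tg_car -> tg_car -> tg_car;
  tg_inv : tg_car -> tg_car;
  tg_one : tg_car;
  tg_mulA : forall x y z, tg_mul x (tg_mul y z) = tg_mul (tg_mul x y) z;
  tg_mul1g : forall x, tg_mul tg_one x = x;
  tg_mulg1 : forall x, tg_mul x tg_one = x;
  tg_mulVg : forall x, tg_mul (tg_inv x) x = tg_one;
  tg_mulgV : forall x, tg_mul x (tg_inv x) = tg_one;
  tg_open : (tg_car -> Prop) -> Prop;
  tg_open_setT : tg_open (fun _ => True);
  tg_open_inter : forall U V, tg_open U -> tg_open V ->
      tg_open (fun x => U x /\ V x);
  tg_open_union : forall S : (tg_car -> Prop) -> Prop,
      (forall U, S U -> tg_open U) -> tg_open (fun x => exists U, S U /\ U x);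
  tg_mul_cont : forall W, tg_open W -> forall x y, W (tg_mul x y) ->
      exists A B, tg_open A /\ tg_open B /\ A x /\ B y /\
        (forall a b, A a -> B b -> W (tg_mul a b));
  tg_inv_cont : forall W, tg_open W -> tg_open (fun x => W (tg_inv x))
}.

Arguments tg_mul {t}. Arguments tg_inv {t}. Arguments tg_one {t}.
Arguments tg_open {t}.

Definition hausdorff (G : TopGroup) : Prop :=
  forall x y : G, x <> y -> exists U V, tg_open U /\ tg_open V /\ U x /\ V y /\
    (forall z, U z -> V z -> False).

Definition continuous_map {A B : TopGroup} (f : A -> B) : Prop :=
  forall V, tg_open V -> tg_open (fun x => V (f x)).

Definition group_hom {A B : TopGroup} (f : A -> B) : Prop :=
  forall x y, f (tg_mul x y) = tg_mul (f x) (f y).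

Definition cont_hom {A B : TopGroup} (f : A -> B) : Prop :=
  group_hom f /\ continuous_map f.

(* A continuous homomorphism is discrete if it factors through a discrete
   group, equivalently its kernel is open. *)
Definition discrete_hom {A B : TopGroup} (f : A -> B) : Prop :=
  tg_open (fun x => f x = tg_one).

Definition subgroup {G : TopGroup} (H : G -> Prop) : Prop :=
  H tg_one /\ (forall x y, H x -> H y -> H (tg_mul x y)) /\
  (forall x, H x -> H (tg_inv x)).

Definition normal_subgroup {G : TopGroup} (N : G -> Prop) : Prop :=
  subgroup N /\ forall g x, N x -> N (tg_mul (tg_mul g x) (tg_inv g)).

Definition normal_closure {G : TopGroup} (H : G -> Prop) : G -> Prop :=
  fun x => forall N, normal_subgroup N -> (forall h, H h -> N h) -> N x.

Definition is_quotient {G Q : TopGroup} (N : G -> Prop) (p : G -> Q) : Prop :=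
  group_hom p /\ (forall q : Q, exists g, p g = q) /\
  (forall g, p g = tg_one <-> N g) /\
  (forall V : Q -> Prop, tg_open V <-> tg_open (fun g => V (p g))).

(* Discrete pi-sets: sets with an action of pi which is continuous for the
   discrete topology on the set, i.e. the preimage of each point
   is open in pi x X. *)
Record dpiset (P : TopGroup) := {
  ps_car :> Type;
  ps_act : P -> ps_car -> ps_car;
  ps_act1 : forall x, ps_act tg_one x = x;
  ps_actM : forall g h x, ps_act (tg_mul g h) x = ps_act g (ps_act h x);
  ps_act_cont : forall x y, tg_open (fun g => ps_act g x = y)
}.

Arguments ps_act {P} d.

Definition equivariant {P : TopGroup} {X Y : dpiset P} (f : X -> Y) : Prop :=
  forall g x, f (ps_act X g x) = ps_act Y g (f x).

(* Aut(F_P): automorphisms of the forgetful functor on discrete P-sets. *)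
Record AutF (P : TopGroup) := {
  af_comp : forall X : dpiset P, X -> X;
  af_nat : forall (X Y : dpiset P) (f : X -> Y), equivariant f ->
      forall x, f (af_comp X x) = af_comp Y (f x);
  af_bij : forall X : dpiset P, exists inv : X -> X,
      (forall x, inv (af_comp X x) = x) /\ (forall x, af_comp X (inv x) = x)
}.

Arguments af_comp {P} a X x.

(* compact-open topology on Aut(F_P): generated by the subbasic opens
   { phi | phi_X x = y } (compact subsets of a discrete set are finite). *)
Definition subbasic_pt (P : TopGroup) := {X : dpiset P & (X * X)%type}.

Definition sat_all {P : TopGroup} (l : list (subbasic_pt P)) (phi : AutF P)
  : Prop :=
  forall t, In t l -> af_comp phi (projT1 t) (fst (projT2 t)) = snd (projT2 t).

Definition AutF_open {P : TopGroup} (W : AutF P -> Prop) : Prop :=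
  forall phi, W phi -> exists l : list (subbasic_pt P),
    sat_all l phi /\ forall psi, sat_all l psi -> W psi.

Section Rho.
Context {P : TopGroup}.
Variable g : tg_car P.

Lemma rho_nat (X Y : dpiset P) (f : X -> Y) : equivariant f ->
  forall x, f (ps_act X g x) = ps_act Y g (f x).
Proof. intros Hf x; apply Hf. Qed.

Lemma rho_bij (X : dpiset P) : exists inv : X -> X,
  (forall x, inv (ps_act X g x) = x) /\ (forall x, ps_act X g (inv x) = x).
Proof.
  exists (ps_act X (tg_inv g)); split; intro x.
  - rewrite <- ps_actM, tg_mulVg; apply ps_act1.
  - rewrite <- ps_actM, tg_mulgV; apply ps_act1.
Qed.

Definition rho : AutF P :=
  {| af_comp := fun X => ps_act X g; af_nat := rho_nat; af_bij := rho_bij |}.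
End Rho.

(* P is Noohi: P -> Aut(F_P) is an isomorphism of topological groups
   (it is always a group homomorphism). *)
Definition Noohi (P : TopGroup) : Prop :=
  (forall g h : P, (forall (X : dpiset P) x, ps_act X g x = ps_act X h x) ->
     g = h) /\
  (forall phi : AutF P, exists g : P,
     forall (X : dpiset P) x, af_comp phi X x = ps_act X g x) /\
  (forall W : AutF P -> Prop, AutF_open W -> tg_open (fun g : P => W (rho g))) /\
  (forall U : P -> Prop, tg_open U ->
     AutF_open (fun phi => exists g, U g /\
        forall (X : dpiset P) x, af_comp phi X x = ps_act X g x)).

(* eta : Q -> Q' is the unit of the Noohi-completion adjunction at Q,
   i.e. a universal arrow from Q to the inclusion of Noohi groups into
   topological groups. *)
Definition noohi_completion {Q Q' : TopGroup} (eta : Q -> Q') : Prop :=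
  Noohi Q' /\ cont_hom eta /\
  forall (R : TopGroup) (f : Q -> R), Noohi R -> cont_hom f ->
    (exists g : Q' -> R, cont_hom g /\ forall x, g (eta x) = f x) /\
    (forall g1 g2 : Q' -> R, cont_hom g1 -> cont_hom g2 ->
       (forall x, g1 (eta x) = f x) -> (forall x, g2 (eta x) = f x) ->
       forall y, g1 y = g2 y).

From Stdlib Require Import List FunctionalExtensionality PropExtensionality.
From Stdlib Require Import ProofIrrelevance ClassicalEpsilon Classical.
Import ListNotations.
Set Implicit Arguments.

(* The backward implication is continuity of [eta \o p].  For the forward one,
   the kernel of [lam' \o eta] is open in [Q] by the quotient topology, so
   [lam' \o eta] is a continuous homomorphism into the discrete group on [G],
   which is Noohi; the universal property extends it to [g : pi' -> G] with
   open kernel.  The image of [eta] is dense in [pi'] and [G] is Hausdorff,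
   so [g] and [lam'] coincide. *)

Section TopGroupFacts.
Context {G : TopGroup}.

Lemma open_ext (U V : G -> Prop) :
  (forall x, U x <-> V x) -> tg_open U -> tg_open V.
Proof.
  intros HUV HU. replace V with U; [exact HU |].
  extensionality x. apply propositional_extensionality, HUV.
Qed.

Lemma open_const (A : Prop) : tg_open (fun _ : G => A).
Proof.
  destruct (classic A) as [HA | HA].
  - apply (open_ext (fun _ => True)); [tauto | apply tg_open_setT].
  - apply (open_ext (fun x => exists U, False /\ U x)).
    + intros x; split; [intros [U [[] _]] | tauto].
    + apply tg_open_union; tauto.
Qed.

Lemma locally_open (U : G -> Prop) :
  (forall x, U x -> exists N, tg_open N /\ N x /\ forall y, N y -> U y) ->
  tg_open U.
Proof.
  intros HU.
  apply (open_ext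
    (fun x => exists N, (tg_open N /\ forall y, N y -> U y) /\ N x)).
  - intros x; split.
    + intros [N [[_ HN] Nx]]; auto.
    + intros Ux; destruct (HU x Ux) as [N [? [? ?]]]; eauto.
  - apply tg_open_union; intros N [? _]; auto.
Qed.

Lemma open_Forall (A : Type) (L : list A) (U : A -> G -> Prop) :
  (forall a, In a L -> tg_open (U a)) ->
  tg_open (fun x => forall a, In a L -> U a x).
Proof.
  induction L as [| a L IH]; intros HL.
  - apply (open_ext (fun _ => True)); [simpl; tauto | apply tg_open_setT].
  - apply (open_ext (fun x => U a x /\ forall b, In b L -> U b x)).
    + intros x; simpl; split.
      * intros [Ha HL'] b [<- | Hb]; auto.
      * intros Hx; split; [apply Hx; left | intros b Hb; apply Hx; right]; auto.
    + apply tg_open_inter; [apply HL; left; reflexivity |].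
      apply IH; intros b Hb; apply HL; right; exact Hb.
Qed.

Lemma open_mull (U : G -> Prop) (a : G) :
  tg_open U -> tg_open (fun x => U (tg_mul a x)).
Proof.
  intros HU; apply locally_open; intros x Hx.
  destruct (tg_mul_cont G U HU a x Hx) as [A [B [_ [HB [Aa [Bx HAB]]]]]].
  exists B; split; [exact HB | split; [exact Bx | intros y By; apply HAB; auto]].
Qed.

Lemma open_mulr (U : G -> Prop) (a : G) :
  tg_open U -> tg_open (fun x => U (tg_mul x a)).
Proof.
  intros HU; apply locally_open; intros x Hx.
  destruct (tg_mul_cont G U HU x a Hx) as [A [B [HA [_ [Ax [Ba HAB]]]]]].
  exists A; split; [exact HA | split; [exact Ax | intros y Ay; apply HAB; auto]].
Qed.

Lemma mulKg (a x : G) : tg_mul (tg_inv a) (tg_mul a x) = x.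
Proof. rewrite tg_mulA, tg_mulVg; apply tg_mul1g. Qed.

Lemma mulVKg (a x : G) : tg_mul a (tg_mul (tg_inv a) x) = x.
Proof. rewrite tg_mulA, tg_mulgV; apply tg_mul1g. Qed.

Definition conjg (s x : G) : G := tg_mul (tg_mul s x) (tg_inv s).

Lemma conjg_cont_hom (s : G) : cont_hom (conjg s).
Proof.
  split.
  - intros x y; unfold conjg.
    rewrite !tg_mulA, <- (tg_mulA _ _ (tg_inv s) s), tg_mulVg, tg_mulg1.
    reflexivity.
  - intros W HW; unfold conjg.
    apply (open_mull (fun z => W (tg_mul z (tg_inv s)))), open_mulr, HW.
Qed.

End TopGroupFacts.

Lemma hom_one (G H : TopGroup) (f : G -> H) : group_hom f -> f tg_one = tg_one.
Proof.
  intros Hf.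
  transitivity (tg_mul (tg_inv (f tg_one)) (tg_mul (f tg_one) (f tg_one))).
  - symmetry; apply mulKg.
  - rewrite <- Hf, tg_mulg1; apply tg_mulVg.
Qed.

Lemma cont_hom_comp (A B C : TopGroup) (f : A -> B) (g : B -> C) :
  cont_hom f -> cont_hom g -> cont_hom (fun x => g (f x)).
Proof.
  intros [Hf Hfc] [Hg Hgc]; split.
  - intros x y; rewrite Hf; apply Hg.
  - intros V HV; exact (Hfc _ (Hgc V HV)).
Qed.

Record Sym (T : Type) := {
  sfun : T -> T;
  sfun_inv : T -> T;
  sfunK : forall x, sfun (sfun_inv x) = x;
  sfun_invK : forall x, sfun_inv (sfun x) = x
}.
Arguments sfun {T} s x.
Arguments sfun_inv {T} s x.

Lemma sym_eq (T : Type) (a b : Sym T) : (forall x, sfun a x = sfun b x) -> a = b.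
Proof.
  destruct a as [fa ga fga gfa], b as [fb gb fgb gfb]; simpl; intros Hab.
  assert (fa = fb) by (extensionality x; auto). subst fb.
  assert (ga = gb).
  { extensionality x. rewrite <- (gfb (ga x)), fga. reflexivity. }
  subst gb. f_equal; apply proof_irrelevance.
Qed.

Section SymGroup.
Variable T : Type.

Definition sone : Sym T :=
  {| sfun := fun x => x; sfun_inv := fun x => x;
     sfunK := fun _ => eq_refl; sfun_invK := fun _ => eq_refl |}.

Lemma smulK (a b : Sym T) x : sfun a (sfun b (sfun_inv b (sfun_inv a x))) = x.
Proof. rewrite !sfunK; reflexivity. Qed.

Lemma smul_invK (a b : Sym T) x : sfun_inv b (sfun_inv a (sfun a (sfun b x))) = x.
Proof. rewrite !sfun_invK; reflexivity. Qed.

Definition smul (a b : Sym T) : Sym T :=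
  {| sfun := fun x => sfun a (sfun b x); sfun_inv := fun x => sfun_inv b (sfun_inv a x);
     sfunK := smulK a b; sfun_invK := smul_invK a b |}.

Definition sinv (a : Sym T) : Sym T :=
  {| sfun := sfun_inv a; sfun_inv := sfun a;
     sfunK := sfun_invK a; sfun_invK := sfunK a |}.

(* The topology of pointwise convergence, i.e. the compact-open topology for
   the discrete topology on [T]. *)
Definition sym_open (U : Sym T -> Prop) : Prop :=
  forall s, U s -> exists l : list T,
    forall t, (forall x, In x l -> sfun t x = sfun s x) -> U t.

Lemma sym_open_setT : sym_open (fun _ => True).
Proof. intros s _; exists nil; auto. Qed.

Lemma sym_open_inter U V :
  sym_open U -> sym_open V -> sym_open (fun x => U x /\ V x).
Proof.
  intros HU HV s [Us Vs].
  destruct (HU s Us) as [l1 H1], (HV s Vs) as [l2 H2].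
  exists (l1 ++ l2); intros t Ht; split; [apply H1 | apply H2];
    intros x Hx; apply Ht, in_or_app; auto.
Qed.

Lemma sym_open_union (S : (Sym T -> Prop) -> Prop) :
  (forall U, S U -> sym_open U) -> sym_open (fun x => exists U, S U /\ U x).
Proof.
  intros HS s [U [SU Us]]. destruct (HS U SU s Us) as [l Hl].
  exists l; intros t Ht; exists U; auto.
Qed.

Lemma sym_mul_cont W : sym_open W -> forall x y, W (smul x y) ->
  exists A B, sym_open A /\ sym_open B /\ A x /\ B y /\
    (forall a b, A a -> B b -> W (smul a b)).
Proof.
  intros HW x y Wxy. destruct (HW _ Wxy) as [l Hl].
  exists (fun a => forall z, In z l -> sfun a (sfun y z) = sfun x (sfun y z)),
         (fun b => forall z, In z l -> sfun b z = sfun y z).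
  split; [| split; [| split; [| split]]]; auto.
  - intros s Hs. exists (map (sfun y) l). intros t Ht z Hz.
    rewrite Ht by (apply in_map; auto). apply Hs; auto.
  - intros s Hs. exists l. intros t Ht z Hz. rewrite Ht by auto. apply Hs; auto.
  - intros a b Ha Hb. apply Hl. intros z Hz; simpl. rewrite Hb by auto. apply Ha, Hz.
Qed.

Lemma sym_inv_cont W : sym_open W -> sym_open (fun x => W (sinv x)).
Proof.
  intros HW s Hs. destruct (HW _ Hs) as [l Hl].
  exists (map (sfun_inv s) l). intros t Ht. apply Hl. intros z Hz; simpl.
  assert (E : sfun t (sfun_inv s z) = z)
    by (rewrite Ht by (apply in_map; auto); apply sfunK).
  rewrite <- E at 1. apply sfun_invK.
Qed.

Definition SymG : TopGroup := {|
  tg_car := Sym T; tg_mul := smul; tg_inv := sinv; tg_one := sone;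
  tg_mulA := fun x y z =>
    sym_eq (smul x (smul y z)) (smul (smul x y) z) (fun _ => eq_refl);
  tg_mul1g := fun x => sym_eq (smul sone x) x (fun _ => eq_refl);
  tg_mulg1 := fun x => sym_eq (smul x sone) x (fun _ => eq_refl);
  tg_mulVg := fun x => sym_eq (smul (sinv x) x) sone (sfun_invK x);
  tg_mulgV := fun x => sym_eq (smul x (sinv x)) sone (sfunK x);
  tg_open := sym_open;
  tg_open_setT := sym_open_setT;
  tg_open_inter := sym_open_inter;
  tg_open_union := sym_open_union;
  tg_mul_cont := sym_mul_cont;
  tg_inv_cont := sym_inv_cont |}.

End SymGroup.

Section PiSets.
Variable P : TopGroup.

Definition dtrivial (T : Type) : dpiset P :=
  {| ps_car := T; ps_act := fun _ x => x;
     ps_act1 := fun _ => eq_refl; ps_actM := fun _ _ _ => eq_refl;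
     ps_act_cont := fun x y => @open_const P (x = y) |}.

Section Product.
Variables X Y : dpiset P.

Definition prod_act (g : P) (t : X * Y) : X * Y :=
  (ps_act X g (fst t), ps_act Y g (snd t)).

Lemma prod_act1 t : prod_act tg_one t = t.
Proof. destruct t; unfold prod_act; simpl; rewrite !ps_act1; reflexivity. Qed.

Lemma prod_actM g h t : prod_act (tg_mul g h) t = prod_act g (prod_act h t).
Proof. destruct t; unfold prod_act; simpl; rewrite !ps_actM; reflexivity. Qed.

Lemma prod_act_cont t t' : tg_open (fun g => prod_act g t = t').
Proof.
  destruct t as [x y], t' as [x' y'].
  apply (open_ext (fun g => ps_act X g x = x' /\ ps_act Y g y = y')).
  - intros g; symmetry; apply pair_equal_spec.
  - apply tg_open_inter; apply ps_act_cont.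
Qed.

Definition dprod : dpiset P :=
  {| ps_car := (X * Y)%type; ps_act := prod_act;
     ps_act1 := prod_act1; ps_actM := prod_actM; ps_act_cont := prod_act_cont |}.

End Product.

Section OptionList.
Variable X : dpiset P.

Lemma option_act1 (o : option X) : option_map (ps_act X tg_one) o = o.
Proof. destruct o; simpl; rewrite ?ps_act1; reflexivity. Qed.

Lemma option_actM g h (o : option X) :
  option_map (ps_act X (tg_mul g h)) o =
  option_map (ps_act X g) (option_map (ps_act X h) o).
Proof. destruct o; simpl; rewrite ?ps_actM; reflexivity. Qed.

Lemma option_act_cont (o o' : option X) :
  tg_open (fun g => option_map (ps_act X g) o = o').
Proof.
  destruct o as [x |]; [destruct o' as [x' |] |]; simpl.
  - apply (open_ext (fun g => ps_act X g x = x')); [| apply ps_act_cont].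
    intros g; split; [intros ->; reflexivity | intros E; injection E; auto].
  - apply (open_ext (fun _ => False)); [intros g; split; [tauto | discriminate] |].
    apply open_const.
  - apply open_const.
Qed.

Definition doption : dpiset P :=
  {| ps_car := option X; ps_act := fun g => option_map (ps_act X g);
     ps_act1 := option_act1; ps_actM := option_actM; ps_act_cont := option_act_cont |}.

Lemma list_act1 (m : list X) : map (ps_act X tg_one) m = m.
Proof. transitivity (map (fun x => x) m); [apply map_ext, ps_act1 | apply map_id]. Qed.

Lemma list_actM g h (m : list X) :
  map (ps_act X (tg_mul g h)) m = map (ps_act X g) (map (ps_act X h) m).
Proof. rewrite map_map; apply map_ext, ps_actM. Qed.

Lemma list_act_cont (m m' : list X) : tg_open (fun g => map (ps_act X g) m = m').
Proof.
  revert m'; induction m as [| x m IH]; intros [| x' m']; simpl.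
  - apply open_const.
  - apply open_const.
  - apply (open_ext (fun _ => False)); [intros g; split; [tauto | discriminate] |].
    apply open_const.
  - apply (open_ext (fun g => ps_act X g x = x' /\ map (ps_act X g) m = m')).
    + intros g; split; [intros [-> ->]; reflexivity | intros E; injection E; auto].
    + apply tg_open_inter; [apply ps_act_cont | apply IH].
Qed.

Definition dlist : dpiset P :=
  {| ps_car := list X; ps_act := fun g => map (ps_act X g);
     ps_act1 := list_act1; ps_actM := list_actM; ps_act_cont := list_act_cont |}.

End OptionList.

Lemma af_comp_option (phi : AutF P) (X : dpiset P) (o : option X) :
  af_comp phi (doption X) o = option_map (af_comp phi X) o.
Proof.
  destruct o as [x |]; simpl.
  - symmetry; apply (af_nat phi (X := X) (Y := doption X) (f := @Some X)).
    intros g y; reflexivity.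
  - symmetry.
    refine (af_nat phi (X := doption X) (Y := doption X) (f := fun _ => None) _ None).
    intros g y; reflexivity.
Qed.

Lemma af_comp_list (phi : AutF P) (X : dpiset P) (m : list X) :
  af_comp phi (dlist X) m = map (af_comp phi X) m.
Proof.
  apply nth_error_ext; intros n.
  rewrite nth_error_map, <- af_comp_option.
  apply (af_nat phi (X := dlist X) (Y := doption X) (f := fun m => nth_error m n)).
  intros g m'; apply nth_error_map.
Qed.

Fixpoint dprod_list (L : list (subbasic_pt P)) : dpiset P :=
  match L with
  | nil => dtrivial unit
  | u :: L' => dprod (projT1 u) (dprod_list L')
  end.

Fixpoint dprod_list_pt (L : list (subbasic_pt P)) : dprod_list L :=
  match L return dprod_list L with
  | nil => tt
  | u :: L' => (fst (projT2 u), dprod_list_pt L')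
  end.

Lemma dprod_list_sat (L : list (subbasic_pt P)) (g h : P) :
  ps_act (dprod_list L) g (dprod_list_pt L) = ps_act (dprod_list L) h (dprod_list_pt L) ->
  sat_all L (rho h) -> sat_all L (rho g).
Proof.
  induction L as [| u L IH]; simpl; intros E Hh t Ht; [destruct Ht |].
  unfold prod_act in E; simpl in E; injection E as Eu EL.
  destruct Ht as [<- | Ht].
  - simpl; rewrite Eu; apply (Hh _ (or_introl eq_refl)).
  - apply IH; [exact EL | intros t' Ht'; apply Hh; right; exact Ht' | exact Ht].
Qed.

Lemma open_sat_all (L : list (subbasic_pt P)) : tg_open (fun g : P => sat_all L (rho g)).
Proof.
  exact (open_Forall L (fun t g => ps_act (projT1 t) g (fst (projT2 t)) = snd (projT2 t))
           (fun t _ => ps_act_cont _ _ _)).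
Qed.

Lemma rho_continuous (W : AutF P -> Prop) :
  AutF_open W -> tg_open (fun g : P => W (rho g)).
Proof.
  intros HW; apply locally_open; intros g Wg.
  destruct (HW _ Wg) as [L [HgL HL]].
  exists (fun h => sat_all L (rho h)).
  split; [apply open_sat_all | split; [exact HgL | intros h Hh; apply HL, Hh]].
Qed.

Lemma Noohi_intro :
  (forall g h : P, (forall (X : dpiset P) x, ps_act X g x = ps_act X h x) -> g = h) ->
  (forall phi : AutF P, exists g : P,
     forall (X : dpiset P) x, af_comp phi X x = ps_act X g x) ->
  (forall (U : P -> Prop) (g : P), tg_open U -> U g ->
     exists L, sat_all L (rho g) /\ forall h, sat_all L (rho h) -> U h) ->
  Noohi P.
Proof.
  intros Hinj Hsurj Hloc.
  split; [exact Hinj | split; [exact Hsurj | split; [exact rho_continuous |]]].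
  intros U HU phi [g [Ug Hg]].
  destruct (Hloc U g HU Ug) as [L [HgL HL]].
  exists L; split.
  - intros t Ht; rewrite Hg; exact (HgL t Ht).
  - intros psi Hpsi. destruct (Hsurj psi) as [h Hh].
    exists h; split; [apply HL | exact Hh].
    intros t Ht; cbn; rewrite <- Hh; exact (Hpsi t Ht).
Qed.

End PiSets.

Section ActionPerm.
Variables (P : TopGroup) (X : dpiset P).

Lemma act_invK (g : P) (x : X) : ps_act X g (ps_act X (tg_inv g) x) = x.
Proof. rewrite <- ps_actM, tg_mulgV; apply ps_act1. Qed.

Lemma act_Kinv (g : P) (x : X) : ps_act X (tg_inv g) (ps_act X g x) = x.
Proof. rewrite <- ps_actM, tg_mulVg; apply ps_act1. Qed.

Definition act_perm (g : P) : SymG X :=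
  {| sfun := ps_act X g; sfun_inv := ps_act X (tg_inv g);
     sfunK := act_invK g; sfun_invK := act_Kinv g |}.

Lemma act_perm_cont_hom : cont_hom act_perm.
Proof.
  split.
  - intros g h; apply sym_eq; intros x; apply ps_actM.
  - intros V HV; apply locally_open; intros g Vg.
    destruct (HV _ Vg) as [l Hl].
    exists (fun h => ps_act (dlist X) h l = ps_act (dlist X) g l).
    split; [apply ps_act_cont | split; [reflexivity |]].
    intros h Hh; apply Hl, map_ext_in_iff, Hh.
Qed.

End ActionPerm.

Section SymNoohi.
Variable T : Type.

Lemma sym_act_cont (x y : T) : @tg_open (SymG T) (fun s => sfun s x = y).
Proof.
  intros s Hs; exists [x]; intros t Ht.
  rewrite Ht by (left; reflexivity); exact Hs.
Qed.

Definition tautological_set : dpiset (SymG T) :=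
  {| ps_car := T; ps_act := fun (s : SymG T) x => sfun (s : Sym T) x;
     ps_act1 := fun _ => eq_refl; ps_actM := fun _ _ _ => eq_refl;
     ps_act_cont := sym_act_cont |}.

Section OrbitMap.
Variables (X : dpiset (SymG T)) (x : X) (l : list T).
Hypothesis Hstab :
  forall t : Sym T, (forall z, In z l -> sfun t z = z) -> ps_act X t x = x.

(* [t l |-> t x] on the orbit of [l] and [None] off it; well defined because
   every permutation fixing [l] pointwise fixes [x]. *)
Definition orbit_map (m : list T) : option X :=
  match excluded_middle_informative (exists t : Sym T, m = map (sfun t) l) with
  | left Hm => Some (ps_act X (proj1_sig (constructive_indefinite_description _ Hm)) x)
  | right _ => None
  end.

Lemma orbit_map_act (t : Sym T) : orbit_map (map (sfun t) l) = Some (ps_act X t x).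
Proof.
  unfold orbit_map.
  destruct excluded_middle_informative as [Hm | Hm]; [| exfalso; eauto].
  destruct constructive_indefinite_description as [t' Ht']; simpl.
  assert (Hfix : ps_act X (smul (sinv t) t') x = x).
  { apply Hstab; intros z Hz; simpl.
    rewrite <- (proj1 map_ext_in_iff Ht' z Hz); apply sfun_invK. }
  rewrite <- Hfix at 2; rewrite <- ps_actM; do 2 f_equal.
  apply sym_eq; intros z; simpl; symmetry; apply sfunK.
Qed.

Lemma orbit_map_base : orbit_map l = Some x.
Proof.
  transitivity (orbit_map (map (sfun (sone T)) l)); [f_equal; symmetry; apply map_id |].
  rewrite orbit_map_act; f_equal; apply ps_act1.
Qed.

Lemma orbit_map_out (m : list T) :
  ~ (exists t : Sym T, m = map (sfun t) l) -> orbit_map m = None.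
Proof. unfold orbit_map; destruct excluded_middle_informative; tauto. Qed.

Lemma orbit_map_equivariant :
  equivariant (X := dlist tautological_set) (Y := doption X) orbit_map.
Proof.
  intros g m; simpl.
  destruct (classic (exists t : Sym T, m = map (sfun t) l)) as [[t ->] | Hm].
  - rewrite orbit_map_act, map_map; simpl; rewrite <- ps_actM.
    exact (orbit_map_act (smul g t)).
  - rewrite !orbit_map_out; [reflexivity | exact Hm |].
    intros [t Ht]; apply Hm; exists (smul (sinv g) t).
    transitivity (map (sfun (sinv g)) (map (fun z => sfun g z) m)).
    + rewrite map_map; symmetry.
      transitivity (map (fun z => z) m); [apply map_ext, sfun_invK | apply map_id].
    + rewrite Ht, map_map; reflexivity.
Qed.

End OrbitMap.

Lemma sym_surj (phi : AutF (SymG T)) : exists s : Sym T,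
  forall (X : dpiset (SymG T)) x, af_comp phi X x = ps_act X s x.
Proof.
  destruct (constructive_indefinite_description _ (af_bij phi tautological_set))
    as [inv [Hinv1 Hinv2]].
  set (s := {| sfun := af_comp phi tautological_set; sfun_inv := inv;
               sfunK := Hinv2; sfun_invK := Hinv1 |} : Sym T).
  exists s; intros X x.
  destruct (ps_act_cont X x x (sone T) (ps_act1 X x)) as [l Hstab].
  pose proof (af_nat phi (orbit_map_equivariant X l Hstab) l) as E.
  rewrite af_comp_list, af_comp_option, (orbit_map_base X l Hstab) in E.
  rewrite (orbit_map_act X l Hstab s
           : orbit_map X x l (map (af_comp phi tautological_set) l) = _) in E.
  injection E as E; symmetry; exact E.
Qed.

Lemma Noohi_Sym : Noohi (SymG T).
Proof.
  apply Noohi_intro.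
  - intros g h Hgh; apply sym_eq; intros x; exact (Hgh tautological_set x).
  - exact sym_surj.
  - intros U g HU Ug. destruct (HU g Ug) as [l Hl].
    exists (map (fun z => existT (fun X : dpiset (SymG T) => (X * X)%type)
                              tautological_set (z, sfun g z)) l).
    split.
    + intros t Ht; apply in_map_iff in Ht as [z [<- _]]; reflexivity.
    + intros h Hh; apply Hl; intros z Hz; exact (Hh _ (in_map _ _ _ Hz)).
Qed.

End SymNoohi.

Section DiscreteGroup.
Variable G : TopGroup.

Lemma discrete_mul_cont (W : G -> Prop) (x y : G) : W (tg_mul x y) ->
  exists A B : G -> Prop, True /\ True /\ A x /\ B y /\
    forall a b, A a -> B b -> W (tg_mul a b).
Proof.
  intros Wxy; exists (fun a => a = x), (fun b => b = y).
  repeat split; intros a b -> ->; exact Wxy.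
Qed.

Definition discrete_group : TopGroup := {|
  tg_car := G; tg_mul := @tg_mul G; tg_inv := @tg_inv G; tg_one := @tg_one G;
  tg_mulA := tg_mulA G; tg_mul1g := tg_mul1g G; tg_mulg1 := tg_mulg1 G;
  tg_mulVg := tg_mulVg G; tg_mulgV := tg_mulgV G;
  tg_open := fun _ => True;
  tg_open_setT := I;
  tg_open_inter := fun _ _ _ _ => I;
  tg_open_union := fun _ _ => I;
  tg_mul_cont := fun W _ => @discrete_mul_cont W;
  tg_inv_cont := fun _ _ => I |}.

Definition regular_set : dpiset discrete_group :=
  {| ps_car := G; ps_act := (@tg_mul G : discrete_group -> G -> G);
     ps_act1 := tg_mul1g G; ps_actM := fun g h x => eq_sym (tg_mulA G g h x);
     ps_act_cont := fun _ _ => I |}.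

Lemma discrete_surj (phi : AutF discrete_group) : exists g : discrete_group,
  forall (X : dpiset discrete_group) x, af_comp phi X x = ps_act X g x.
Proof.
  exists (af_comp phi regular_set tg_one); intros X x.
  pose proof (af_nat phi (X := regular_set) (Y := X) (f := fun h => ps_act X h x)
                (fun g h => ps_actM X g h x) (tg_one : discrete_group)) as E.
  cbv beta in E; rewrite ps_act1 in E; symmetry; exact E.
Qed.

Lemma Noohi_discrete : Noohi discrete_group.
Proof.
  apply Noohi_intro.
  - intros g h Hgh. pose proof (Hgh regular_set tg_one) as E; simpl in E.
    rewrite !tg_mulg1 in E; exact E.
  - exact discrete_surj.
  - intros U g _ Ug.
    exists [existT (fun X : dpiset discrete_group => (X * X)%type)
              regular_set (tg_one, g)].
    split.
    + intros t [<- | []]; apply tg_mulg1.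
    + intros h Hh. specialize (Hh _ (or_introl eq_refl)); simpl in Hh.
      rewrite tg_mulg1 in Hh; rewrite Hh; exact Ug.
Qed.

End DiscreteGroup.

Lemma cont_hom_discrete (A B : TopGroup) (f : A -> B) :
  group_hom f -> tg_open (fun x => f x = tg_one) -> @cont_hom A (discrete_group B) f.
Proof.
  intros Hf Hker; split; [exact Hf |].
  intros V _; apply locally_open; intros x0 Vx0.
  exists (fun x => f (tg_mul (tg_inv x0) x) = tg_one).
  split; [apply (open_mull (fun x => f x = tg_one)), Hker |].
  split; [rewrite tg_mulVg; apply (hom_one Hf) |].
  intros x Hx.
  replace x with (tg_mul x0 (tg_mul (tg_inv x0) x)) by apply mulVKg.
  simpl; rewrite Hf, Hx, tg_mulg1; exact Vx0.
Qed.

Section Flip.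
Variables (T : Type) (B : T -> Prop).

Definition flip_fun (t : T * bool) : T * bool :=
  if excluded_middle_informative (B (fst t)) then (fst t, negb (snd t)) else t.

Lemma flip_fun_in w i : B w -> flip_fun (w, i) = (w, negb i).
Proof. unfold flip_fun; simpl; destruct excluded_middle_informative; tauto. Qed.

Lemma flip_fun_out w i : ~ B w -> flip_fun (w, i) = (w, i).
Proof. unfold flip_fun; simpl; destruct excluded_middle_informative; tauto. Qed.

Lemma flip_funK t : flip_fun (flip_fun t) = t.
Proof.
  destruct t as [w i]; destruct (classic (B w)) as [Hw | Hw].
  - rewrite !flip_fun_in by exact Hw; rewrite Bool.negb_involutive; reflexivity.
  - rewrite !flip_fun_out by exact Hw; reflexivity.
Qed.

Lemma flip_fun_comm (f : T -> T) : (forall w, B (f w) <-> B w) ->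
  forall t, flip_fun (f (fst t), snd t) = (f (fst (flip_fun t)), snd (flip_fun t)).
Proof.
  intros Hf [w i]; simpl; destruct (classic (B w)) as [Hw | Hw].
  - rewrite !flip_fun_in by (first [exact Hw | apply Hf, Hw]); reflexivity.
  - rewrite !flip_fun_out by (first [exact Hw | rewrite Hf; exact Hw]); reflexivity.
Qed.

Definition flip_on : Sym (T * bool) :=
  {| sfun := flip_fun; sfun_inv := flip_fun;
     sfunK := flip_funK; sfun_invK := flip_funK |}.

End Flip.

Section NoohiCompletion.
Variables (Q pi' : TopGroup) (eta : Q -> pi').
Hypothesis Hc : noohi_completion eta.

Lemma completion_hom_unique (R : TopGroup) (g1 g2 : pi' -> R) :
  Noohi R -> cont_hom g1 -> cont_hom g2 ->
  (forall q, g1 (eta q) = g2 (eta q)) -> forall y, g1 y = g2 y.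
Proof.
  intros HR H1 H2 Hagree.
  destruct Hc as [_ [Heta Huniv]].
  destruct (Huniv R (fun q => g1 (eta q)) HR (cont_hom_comp Heta H1)) as [_ Huniq].
  apply Huniq; [exact H1 | exact H2 | reflexivity | intros q; symmetry; apply Hagree].
Qed.

(* If [y x] is not in the [eta Q]-orbit [B] of [x], flipping the sheets of
   [X * bool] over [B] commutes with [eta Q] but not with [y]; this
   contradicts the uniqueness in the universal property, with values in the
   Noohi group [SymG (X * bool)]. *)
Lemma completion_orbit (X : dpiset pi') (x : X) (y : pi') :
  exists q, ps_act X (eta q) x = ps_act X y x.
Proof.
  destruct Hc as [_ [[Heta _] _]].
  apply NNPP; intros Hy.
  set (B := fun w : X => exists q, w = ps_act X (eta q) x).
  assert (HB : forall q w, B (ps_act X (eta q) w) <-> B w).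
  { intros q w; split.
    - intros [q' Hq']; exists (tg_mul (tg_inv q) q').
      rewrite Heta, ps_actM, <- Hq', <- ps_actM, <- Heta, tg_mulVg, (hom_one Heta).
      symmetry; apply ps_act1.
    - intros [q' ->]; exists (tg_mul q q'); rewrite Heta, ps_actM; reflexivity. }
  assert (Bx : B x) by (exists tg_one; rewrite (hom_one Heta), ps_act1; reflexivity).
  assert (Byx : ~ B (ps_act X y x))
    by (intros [q Hq]; apply Hy; exists q; symmetry; exact Hq).
  set (D := dprod X (dtrivial pi' bool)).
  set (s := flip_on B : SymG D).
  assert (Hcomm : forall q, act_perm D (eta q) = conjg s (act_perm D (eta q))).
  { intros q; apply sym_eq; intros t; simpl; unfold prod_act; simpl.
    rewrite (flip_fun_comm B _ (HB q)), flip_funK; reflexivity. }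
  pose proof (completion_hom_unique (g2 := fun g => conjg s (act_perm D g))
    (Noohi_Sym D) (act_perm_cont_hom D)
    (cont_hom_comp (act_perm_cont_hom D) (conjg_cont_hom s)) Hcomm y) as E.
  apply (f_equal (fun a => sfun a (x, false))) in E; simpl in E.
  rewrite (flip_fun_in B x false Bx) in E; unfold prod_act in E; simpl in E.
  rewrite (flip_fun_out B _ true Byx) in E.
  discriminate E.
Qed.

Lemma completion_dense (W : pi' -> Prop) (y : pi') :
  tg_open W -> W y -> exists q, W (eta q).
Proof.
  intros HW Wy.
  destruct Hc as [[Hinj [_ [_ Hopen]]] _].
  destruct (Hopen W HW (rho y)) as [L [HyL HL]].
  { exists y; split; [exact Wy | reflexivity]. }
  destruct (completion_orbit _ (dprod_list_pt L) y) as [q Hq].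
  destruct (HL (rho (eta q)) (dprod_list_sat _ Hq HyL)) as [g [Wg Hg]].
  exists q; replace (eta q) with g; [exact Wg |].
  symmetry; apply Hinj; exact Hg.
Qed.

Lemma completion_map_ext (G : TopGroup) (f1 f2 : pi' -> G) :
  hausdorff G -> continuous_map f1 -> continuous_map f2 ->
  (forall q, f1 (eta q) = f2 (eta q)) -> forall y, f1 y = f2 y.
Proof.
  intros HG H1 H2 Hagree y; apply NNPP; intros Hne.
  destruct (HG _ _ Hne) as [U [V [HU [HV [Uy [Vy Hdisj]]]]]].
  destruct (completion_dense (fun z => U (f1 z) /\ V (f2 z)) y) as [q [Uq Vq]].
  - apply tg_open_inter; [apply H1, HU | apply H2, HV].
  - split; assumption.
  - rewrite Hagree in Uq; exact (Hdisj _ Uq Vq).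
Qed.

End NoohiCompletion.

Theorem lemma2p29 (pi : TopGroup) (H : pi -> Prop) (Q pi' G : TopGroup)
  (p : pi -> Q) (eta : Q -> pi') (lam' : pi' -> G) :
  Noohi pi -> subgroup H ->
  is_quotient (normal_closure H) p ->
  noohi_completion eta ->
  hausdorff G -> cont_hom lam' ->
  (discrete_hom (fun x => lam' (eta (p x))) <-> discrete_hom lam').
Proof.
  intros _ _ [_ [_ [_ Hp_top]]] Hc HG [Hlam_hom Hlam_cont].
  destruct (proj2 Hc) as [[Heta_hom Heta_cont] Huniv].
  split; intros Hd.
  - assert (Hker : tg_open (fun q => lam' (eta q) = tg_one))
      by exact (proj2 (Hp_top (fun q => lam' (eta q) = tg_one)) Hd).
    assert (Hh : @cont_hom Q (discrete_group G) (fun q => lam' (eta q))).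
    { apply cont_hom_discrete; [| exact Hker].
      intros a b; rewrite Heta_hom; apply Hlam_hom. }
    destruct (Huniv _ _ (Noohi_discrete G) Hh) as [[g [[_ Hg_cont] Hg_eta]] _].
    assert (Heq : forall y, lam' y = g y).
    { apply (completion_map_ext Hc HG Hlam_cont).
      - intros V _; apply Hg_cont; exact I.
      - intros q; symmetry; apply Hg_eta. }
    apply (open_ext (fun y => g y = tg_one)); [intros y; rewrite Heq; reflexivity |].
    exact (Hg_cont (fun z => z = tg_one) I).
  - exact (proj1 (Hp_top (fun q => lam' (eta q) = tg_one)) (Heta_cont _ Hd)).
Qed.
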